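(* Let $T$ be a decomposition tree of a distance-hereditary graph $G$, and let $v$ be an internal node of $T$ labeled $\odot$ with left child $v_l$ and right child $v_r$, such that property (P) holds at $v_l$ and at $v_r$. Then $\hat{min}(v)=\hat{min}(v_l)+\hat{min}(v_r)$.
   Context: All graphs are finite, simple, undirected. For a graph $H$ and $S\subseteq V(H)$, $N_H[S]$ is $S$ together with all vertices adjacent to a vertex of $S$, and $H[S]$ is the induced subgraph. Graphs carry a ''twin set'': a single-vertex graph on $x$ has twin set $\{x\}$. For vertex-disjoint graphs $G_l,G_r$ with twin sets $TS(G_l),TS(G_r)$: the true twin operation $G_l\otimes G_r$ has vertex set $V(G_l)\cup V(G_r)$, edge set $E(G_l)\cup E(G_r)\cup\{uw: u\in TS(G_l), w\in TS(G_r)\}$ and twin set $TS(G_l)\cup TS(G_r)$; the false twin operation $G_l\odot G_r$ has vertex set $V(G_l)\cup V(G_r)$, edge set $E(G_l)\cup E(G_r)$, twin set $TS(G_l)\cup TS(G_r)$; the attachment operation $G_l\oplus G_r$ has the same vertex and edge sets as $G_l\otimes G_r$ and twin set $TS(G_l)$. A decomposition tree $T$ of $G$ is a rooted binary tree whose leaves are in bijection with $V(G)$, each internal node having a left and a right child and a label in $\{\otimes,\odot,\oplus\}$; for each node $v$ define $\hat G(v)$ and $\hat{TS}(v)$ recursively: for a leaf $x$, the single-vertex graph on $x$ with twin set $\{x\}$; for an internal node $v$ with label $\circ$ and children $v_l,v_r$, $\hat G(v)=\hat G(v_l)\circ\hat G(v_r)$ with the corresponding twin set; one requires $\hat G(\text{root})=G$.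 Then $\hat G(v)$ is the subgraph of $G$ induced by the set $\hat V(v)$ of leaves below $v$. For a node $u$ and $0\le k\le|\hat{TS}(u)|$, call $S\subseteq\hat V(u)$ $k$-feasible if $\hat V(u)\setminus\hat{TS}(u)\subseteq N_{\hat G(u)}[S]$ and there is $X\subseteq S\cap\hat{TS}(u)$ with $|X|=k$ such that $\hat G(u)[S\setminus X]$ has a perfect matching. $\hat\gamma_k(u)$ is the minimum size of a $k$-feasible set. $\hat{min}(u)=\min\{\hat\gamma_k(u):0\le k\le|\hat{TS}(u)|\}$, and $\hat\alpha(u)$, $\hat\beta(u)$ are the smallest and the largest $k$ with $\hat\gamma_k(u)=\hat{min}(u)$. Property (P) holds at $u$ if for every $0\le k\le|\hat{TS}(u)|$: $\hat\gamma_k(u)=\hat{min}(u)+\hat\alpha(u)-k$ when $k\le\hat\alpha(u)$; $\hat\gamma_k(u)=\hat{min}(u)+k-\hat\beta(u)$ when $k\ge\hat\beta(u)$; $\hat\gamma_k(u)=\hat{min}(u)$ when $\hat\alpha(u)<k<\hat\beta(u)$ and $k-\hat\alpha(u)$ is even; and $\hat\gamma_k(u)=\hat{min}(u)+1$ otherwise. *)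

From mathcomp Require Import all_boot.
Set Implicit Arguments. Unset Strict Implicit. Unset Printing Implicit Defensive.

(* Labels: otrue = true twin (⊗), ofalse = false twin (⊙), oattach = attachment (⊕). *)
Inductive op := otrue | ofalse | oattach.

Definition op_eqb (a b : op) : bool :=
  match a, b with
  | otrue, otrue | ofalse, ofalse | oattach, oattach => true
  | _, _ => false
  end.

Inductive dtree (V : Type) :=
| Leaf of V
| Node of op & dtree V & dtree V.
Arguments Leaf {V} _.
Arguments Node {V} _ _ _.

Section DT.
Variable V : finType.

Fixpoint vset (t : dtree V) : {set V} :=
  match t with
  | Leaf x => [set x]
  | Node _ l r => vset l :|: vset r
  end.

Fixpoint ts (t : dtree V) : {set V} :=
  match t with
  | Leaf x => [set x]
  | Node oattach l _ => ts l
  | Node _ l r => ts l :|: ts r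
  end.

Fixpoint edges (t : dtree V) : rel V :=
  match t with
  | Leaf _ => fun _ _ => false
  | Node o l r => fun x y =>
      [|| edges l x y, edges r x y
        | ~~ op_eqb o ofalse &&
          (((x \in ts l) && (y \in ts r)) || ((y \in ts l) && (x \in ts r)))]
  end.

Fixpoint wf_tree (t : dtree V) : Prop :=
  match t with
  | Leaf _ => True
  | Node _ l r => [/\ wf_tree l, wf_tree r & [disjoint vset l & vset r]]
  end.

Inductive subtree : dtree V -> dtree V -> Prop :=
| sub_refl t : subtree t t
| sub_l o l r t : subtree t l -> subtree t (Node o l r)
| sub_r o l r t : subtree t r -> subtree t (Node o l r).

(* t is a decomposition tree of the graph (V, e): leaves in bijection with V
   and \hat G(root) = G. *)
Definition is_dtree (e : rel V) (t : dtree V) : Prop :=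
  [/\ wf_tree t, vset t = setT & forall x y, e x y = edges t x y].

Definition cnbhd (u : dtree V) (S : {set V}) : {set V} :=
  [set x in vset u | (x \in S) || [exists y in S, edges u x y]].

Definition perfect_matching (u : dtree V) (W : {set V}) (M : {set {set V}}) : bool :=
  [forall m in M, [exists x, exists y,
      [&& x \in W, y \in W, x != y, edges u x y & m == [set x; y]]]] &&
  [forall x in W, #|[set m in M | x \in m]| == 1].

Definition has_pm (u : dtree V) (W : {set V}) : bool :=
  [exists M : {set {set V}}, perfect_matching u W M].

Definition kfeasible (u : dtree V) (k : nat) (S : {set V}) : bool :=
  [&& S \subset vset u,
      (vset u :\: ts u) \subset cnbhd u S &
      [exists X : {set V},
         [&& X \subset S :&: ts u, #|X| == k & has_pm u (S :\: X)]]].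

(* \hat\gamma_k(u); None encodes +infinity (no k-feasible set) *)
Definition gamma (u : dtree V) (k : nat) : option nat :=
  if [exists S, kfeasible u k S]
  then Some (\big[minn/#|V|.+1]_(S : {set V} | kfeasible u k S) #|S|)
  else None.

(* \hat{min}(u) = min_{0<=k<=|TS(u)|} \hat\gamma_k(u)  (infinity read as #|V|.+1,
   which exceeds every finite value) *)
Definition hmin (u : dtree V) : nat :=
  \big[minn/#|V|.+1]_(k < #|ts u|.+1) odflt #|V|.+1 (gamma u k).

Definition halpha (u : dtree V) : nat :=
  \big[minn/#|ts u|.+1]_(k < #|ts u|.+1 | gamma u k == Some (hmin u)) (k : nat).

Definition hbeta (u : dtree V) : nat :=
  \big[maxn/0]_(k < #|ts u|.+1 | gamma u k == Some (hmin u)) (k : nat).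

Definition propP (u : dtree V) : Prop :=
  forall k, k <= #|ts u| ->
    [/\ k <= halpha u -> gamma u k = Some (hmin u + halpha u - k),
        hbeta u <= k -> gamma u k = Some (hmin u + k - hbeta u),
        halpha u < k < hbeta u -> ~~ odd (k - halpha u) -> gamma u k = Some (hmin u)
      & halpha u < k < hbeta u -> odd (k - halpha u) -> gamma u k = Some (hmin u).+1].

End DT.

From mathcomp Require Import all_boot.
Set Implicit Arguments. Unset Strict Implicit. Unset Printing Implicit Defensive.

(* At a false twin node v = v_l (.) v_r the graph is the disjoint union of its
   two children with no edge in between, and TS(v) = TS(v_l) u TS(v_r).  Hence
   a set S is feasible at v exactly when its two traces are feasible at the
   children (the removed sets X and the perfect matchings split and glue
   along the sides), so minimum feasible sizes add up.  Property (P) is only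
   needed to know that both children have a feasible set at all. *)

Lemma bigminn_le (I : finType) (P : pred I) (F : I -> nat) x i :
  P i -> \big[minn/x]_(j | P j) F j <= F i.
Proof.
move=> Pi; have : i \in index_enum I by rewrite mem_index_enum.
elim: (index_enum I) => // j s IHs; rewrite inE big_cons.
case/orP=> [/eqP<-|/IHs le_s]; first by rewrite Pi geq_minl.
by case: ifP => // _; apply: leq_trans (geq_minr _ _) le_s.
Qed.

Lemma bigminn_attained (I : finType) (P : pred I) (F : I -> nat) x :
  \big[minn/x]_(i | P i) F i = x \/ exists2 i, P i & \big[minn/x]_(i | P i) F i = F i.
Proof.
elim/big_ind: _; [by left | | by move=> i Pi; right; exists i].
by move=> m n Km Kn; rewrite /minn; case: ifP.
Qed.

Section DecompositionTree.
Variable V : finType.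
Implicit Types (u a b l r : dtree V) (S W : {set V}) (M : {set {set V}}).

Lemma ts_subset_vset u : ts u \subset vset u.
Proof.
elim: u => [x|[] l IHl r IHr] //=; rewrite ?setUSS //.
exact: subset_trans IHl (subsetUl _ _).
Qed.

Lemma edges_vset u x y : edges u x y -> (x \in vset u) && (y \in vset u).
Proof.
have tsP w : {subset ts w <= vset w} := subsetP (ts_subset_vset w).
elim: u => [z|o l IHl r IHr] //=; rewrite !inE.
case/or3P=> [/IHl/andP[-> ->] | /IHr/andP[-> ->] | /andP[_ /orP[]/andP[/tsP-> /tsP->]]];
  by rewrite ?orbT.
Qed.

Lemma wf_subtree (t T : dtree V) : subtree t T -> wf_tree T -> wf_tree t.
Proof. by elim=> // o l r t' _ IH /= [*]; apply: IH. Qed.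

Lemma edges_sym u : symmetric (edges u).
Proof.
elim: u => [//|o l IHl r IHr] x y /=; rewrite IHl IHr.
by congr [|| _, _ | _ && _]; rewrite orbC.
Qed.

Lemma cnbhd_sub u a S S' :
  vset a \subset vset u -> (forall x y, edges a x y -> edges u x y) -> S \subset S' ->
  cnbhd a S \subset cnbhd u S'.
Proof.
move=> /subsetP sub_v sub_e /subsetP sub_S; apply/subsetP=> x; rewrite !inE.
case/andP=> /sub_v-> /orP[/sub_S->//|/existsP[y /andP[yS exy]]].
by apply/orP; right; apply/existsP; exists y; rewrite sub_S // sub_e.
Qed.

Lemma perfect_matching_pair u W M m : perfect_matching u W M -> m \in M ->
  exists x y, [/\ x \in W, y \in W, x != y, edges u x y & m = [set x; y]].
Proof.
case/andP=> /forallP/(_ m)/implyP match_m _ /match_m/existsP[x /existsP[y]].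
by case/and5P=> xW yW xy exy /eqP->; exists x, y.
Qed.

Lemma perfect_matching_sub u W M m : perfect_matching u W M -> m \in M -> m \subset W.
Proof.
move=> pmM /(perfect_matching_pair pmM)[x [y [xW yW _ _ ->]]].
by apply/subsetP=> z; rewrite !inE => /orP[]/eqP->.
Qed.

Lemma perfect_matching_cover u W M x : perfect_matching u W M -> x \in W ->
  #|[set m in M | x \in m]| == 1.
Proof. by case/andP=> _ /forallP/(_ x)/implyP. Qed.

Lemma kfeasible_sub u k S : kfeasible u k S -> S \subset vset u.
Proof. by case/and3P. Qed.

Lemma kfeasible_ts u k S : kfeasible u k S -> k <= #|ts u|.
Proof.
case/and3P=> _ _ /existsP[X /and3P[XS /eqP <- _]].
by apply/subset_leq_card/(subset_trans XS)/subsetIr.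
Qed.

Lemma gamma_le u k S : kfeasible u k S -> odflt #|V|.+1 (gamma u k) <= #|S|.
Proof.
move=> fS; rewrite /gamma; have -> : [exists S, kfeasible u k S] by apply/existsP; exists S.
exact: (@bigminn_le _ (kfeasible u k) (fun S => #|S|) _ _ fS).
Qed.

Lemma gamma_attained u k n : gamma u k = Some n -> exists2 S, kfeasible u k S & #|S| = n.
Proof.
rewrite /gamma; case: ifP => // /existsP[S0 fS0] [<-].
have [dflt|[S fS ->]] := bigminn_attained (kfeasible u k) (fun S => #|S|) #|V|.+1.
  have := @bigminn_le _ (kfeasible u k) (fun S => #|S|) #|V|.+1 _ fS0.
  by rewrite dflt ltnNge max_card.
by exists S.
Qed.

Lemma hmin_le_kfeasible u k S : kfeasible u k S -> hmin u <= #|S|.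
Proof.
move=> fS; have lt_k : k < #|ts u|.+1 by rewrite ltnS (kfeasible_ts fS).
apply: leq_trans (gamma_le fS).
exact: (@bigminn_le _ xpredT (fun i : 'I__ => odflt #|V|.+1 (gamma u i)) _ (Ordinal lt_k)).
Qed.

Lemma hmin_attained u k0 S0 : kfeasible u k0 S0 ->
  exists k, exists2 S, kfeasible u k S & #|S| = hmin u.
Proof.
move=> fS0; have hmin_small : hmin u < #|V|.+1.
  by rewrite ltnS (leq_trans (hmin_le_kfeasible fS0)) ?max_card.
have [dflt|[k _ hmin_k]] : hmin u = #|V|.+1 \/
    exists2 k : 'I_#|ts u|.+1, true & hmin u = odflt #|V|.+1 (gamma u k)
  := bigminn_attained _ _ _.
  by rewrite dflt ltnn in hmin_small.
move: hmin_small; rewrite hmin_k; case gamma_k: (gamma u k) => [n|] /=; last by rewrite ltnn.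
by move=> _; have [S fS <-] := gamma_attained gamma_k; exists k, S.
Qed.

Lemma propP_kfeasible u : propP u -> exists S, kfeasible u 0 S.
Proof.
case/(_ 0 (leq0n _)) => /(_ (leq0n _))/gamma_attained[S fS _] _ _ _.
by exists S.
Qed.

Definition disjoint_union u a b : Prop :=
  [/\ vset u = vset a :|: vset b, ts u = ts a :|: ts b,
      forall x y, edges u x y = edges a x y || edges b x y
    & [disjoint vset a & vset b]].

Lemma disjoint_unionC u a b : disjoint_union u a b -> disjoint_union u b a.
Proof.
case=> vu tu eu dis; split; rewrite 1?setUC // 1?disjoint_sym //.
by move=> x y; rewrite eu orbC.
Qed.

Lemma disjoint_union_false_twin l r :
  [disjoint vset l & vset r] -> disjoint_union (Node ofalse l r) l r.
Proof. by split=> // x y /=; rewrite orbF. Qed.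

Section DisjointUnion.
Variables u a b : dtree V.
Hypothesis du : disjoint_union u a b.

Lemma edges_disjoint_union_l x y : x \in vset a -> edges u x y = edges a x y.
Proof.
case: du => _ _ eu dis xa; rewrite eu; case eb: (edges b x y); rewrite ?orbF //.
by case/andP: (edges_vset eb); rewrite (disjointFr dis xa).
Qed.

Lemma edges_disjoint_union_side x y : edges u x y -> x \in vset a -> y \in vset a.
Proof. by move=> + xa; rewrite edges_disjoint_union_l // => /edges_vset/andP[]. Qed.

Lemma ts_disjoint_union_l x : x \in vset a -> (x \in ts u) = (x \in ts a).
Proof.
case: du => _ -> _ dis xa; rewrite inE; case: (boolP (x \in ts b)); rewrite ?orbF //.
by move/(subsetP (ts_subset_vset b)); rewrite (disjointFr dis xa).
Qed.

Lemma card_disjoint_union S : S \subset vset u -> #|S| = #|S :&: vset a| + #|S :&: vset b|.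
Proof.
case: du => vu _ _ dis sub_S.
rewrite -cardsUI -setIUr -vu (setIidPl sub_S) setIACA (disjoint_setI0 dis).
by rewrite setI0 cards0 addn0.
Qed.

Lemma perfect_matching_restrict W M : perfect_matching u W M ->
  perfect_matching a (W :&: vset a) [set m in M | m \subset vset a].
Proof.
move=> pmM; have [_ /forallP cover] := andP pmM.
have pair_in_a m x : m \in M -> x \in m -> x \in vset a -> m \subset vset a.
  case/(perfect_matching_pair pmM)=> p [q [_ _ _ epq ->]].
  rewrite subUset !sub1set !inE => /orP[]/eqP-> xa; rewrite xa ?andbT.
    exact: edges_disjoint_union_side epq xa.
  by apply: edges_disjoint_union_side xa; rewrite edges_sym.
apply/andP; split.
  apply/forallP=> m; apply/implyP; rewrite inE => /andP[mM ma].
  have [x [y [xW yW xy exy mE]]] := perfect_matching_pair pmM mM.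
  have xa : x \in vset a by apply: (subsetP ma); rewrite mE !inE eqxx.
  apply/existsP; exists x; apply/existsP; exists y.
  rewrite !inE xW yW xa (edges_disjoint_union_side exy xa) xy.
  by rewrite -edges_disjoint_union_l // exy mE eqxx.
apply/forallP=> x; apply/implyP; rewrite inE => /andP[xW xa].
suff -> : [set m in [set m in M | m \subset vset a] | x \in m] = [set m in M | x \in m].
  by have := cover x; rewrite xW.
apply/setP=> m; rewrite !inE andbAC; apply: andb_idr => /andP[mM xm].
exact: pair_in_a mM xm xa.
Qed.

Lemma perfect_matching_union (Wa Wb : {set V}) (Ma Mb : {set {set V}}) :
  Wa \subset vset a -> Wb \subset vset b ->
  perfect_matching a Wa Ma -> perfect_matching b Wb Mb ->
  perfect_matching u (Wa :|: Wb) (Ma :|: Mb).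
Proof.
have [_ _ eu dis] := du; move=> sub_a sub_b pma pmb.
have dW : [disjoint Wa & Wb] := disjointW sub_a sub_b dis.
have only_left c Wc Mc M x : perfect_matching c Wc Mc -> x \notin Wc ->
    [set m in M :|: Mc | x \in m] = [set m in M | x \in m].
  move=> pmc xWc; apply/setP=> m; rewrite !inE andb_orl; apply: orb_idr.
  by case/andP=> /(perfect_matching_sub pmc)/subsetP/[apply] xWc'; rewrite xWc' in xWc.
apply/andP; split.
  apply/forallP=> m; apply/implyP; rewrite inE.
  case/orP=> [/(perfect_matching_pair pma)|/(perfect_matching_pair pmb)] [x [y [xW yW xy exy ->]]];
    by apply/existsP; exists x; apply/existsP; exists y; rewrite !inE xW yW xy eu exy ?orbT eqxx.
apply/forallP=> x; apply/implyP; rewrite inE => /orP[xW|xW].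
  by rewrite (only_left b Wb Mb) ?(disjointFr dW xW) ?(perfect_matching_cover pma).
by rewrite setUC (only_left a Wa Ma) ?(disjointFl dW xW) ?(perfect_matching_cover pmb).
Qed.

Lemma kfeasible_restrict k S : kfeasible u k S -> exists k', kfeasible a k' (S :&: vset a).
Proof.
have [vu _ _ _] := du.
case/and3P=> _ dom /existsP[X /and3P[XS _ /existsP[M pmM]]].
exists #|X :&: vset a|; apply/and3P; split; first exact: subsetIr.
  apply/subsetP=> x; rewrite inE => /andP[xnts xa].
  have : x \in cnbhd u S.
    by apply: (subsetP dom); rewrite inE ts_disjoint_union_l // xnts vu inE xa.
  rewrite !inE xa => /andP[_ /orP[->//|/existsP[y /andP[yS exy]]]].
  apply/orP; right; apply/existsP; exists y.
  by rewrite !inE yS (edges_disjoint_union_side exy xa) -edges_disjoint_union_l.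
apply/existsP; exists (X :&: vset a); apply/and3P; split=> //.
  apply/subsetP=> x; rewrite !inE => /andP[/(subsetP XS)].
  by rewrite !inE => /andP[-> xts] xa; rewrite xa -ts_disjoint_union_l.
apply/existsP; exists [set m in M | m \subset vset a].
have -> : (S :&: vset a) :\: (X :&: vset a) = (S :\: X) :&: vset a.
  by apply/setP=> x; rewrite !inE; case: (x \in vset a); rewrite ?andbF ?andbT.
exact: perfect_matching_restrict.
Qed.

Lemma kfeasible_union ka kb (Sa Sb : {set V}) : kfeasible a ka Sa -> kfeasible b kb Sb ->
  kfeasible u (ka + kb) (Sa :|: Sb).
Proof.
have [vu tu eu dis] := du.
case/and3P=> sub_a dom_a /existsP[Xa /and3P[XSa /eqP <- /existsP[Ma pma]]].
case/and3P=> sub_b dom_b /existsP[Xb /and3P[XSb /eqP <- /existsP[Mb pmb]]].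
have XSa' : Xa \subset Sa := subset_trans XSa (subsetIl _ _).
have XSb' : Xb \subset Sb := subset_trans XSb (subsetIl _ _).
have dS : [disjoint Sa & Sb] := disjointW sub_a sub_b dis.
have edges_a x y : edges a x y -> edges u x y by rewrite eu => ->.
have edges_b x y : edges b x y -> edges u x y by rewrite eu => ->; rewrite orbT.
apply/and3P; split; first by rewrite vu setUSS.
  apply/subsetP=> x /setDP[xu xnt].
  have /norP[xnta xntb] : ~~ ((x \in ts a) || (x \in ts b)) by rewrite -in_setU -tu.
  move: xu; rewrite vu => /setUP[xa|xb].
    apply: (subsetP (cnbhd_sub _ edges_a (subsetUl Sa Sb))).
      by rewrite vu subsetUl.
    by apply: (subsetP dom_a); rewrite inE xnta xa.
  apply: (subsetP (cnbhd_sub _ edges_b (subsetUr Sa Sb))).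
    by rewrite vu subsetUr.
  by apply: (subsetP dom_b); rewrite inE xntb xb.
apply/existsP; exists (Xa :|: Xb); apply/and3P; split.
- apply: subset_trans (setUSS XSa XSb) _.
  by rewrite tu subUset !setISS ?subsetUl ?subsetUr.
- by rewrite cardsU (disjoint_setI0 (disjointW XSa' XSb' dS)) cards0 subn0.
apply/existsP; exists (Ma :|: Mb).
have -> : (Sa :|: Sb) :\: (Xa :|: Xb) = (Sa :\: Xa) :|: (Sb :\: Xb).
  rewrite setDUl -setDDl [Xa :|: Xb]setUC -setDDl.
  rewrite (setDidPl (disjointW (subsetDl _ _) XSb' dS)).
  by rewrite (setDidPl (disjointW (subsetDl _ _) XSa' _)) // disjoint_sym.
by apply: perfect_matching_union; rewrite // (subset_trans (subsetDl _ _)).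
Qed.

End DisjointUnion.
End DecompositionTree.

Theorem lemma17 (V : finType) (e : rel V) (T vl vr : dtree V) :
  symmetric e -> irreflexive e ->
  is_dtree e T ->
  subtree (Node ofalse vl vr) T ->
  propP vl -> propP vr ->
  hmin (Node ofalse vl vr) = hmin vl + hmin vr.
Proof.
move=> _ _ [wfT _ _] sub_v Pl Pr.
have [_ _ dis] := wf_subtree sub_v wfT.
have du := disjoint_union_false_twin dis.
have [[Sl0 fl0] [Sr0 fr0]] := (propP_kfeasible Pl, propP_kfeasible Pr).
apply/eqP; rewrite eqn_leq; apply/andP; split.
  have [kl [Sl fl <-]] := hmin_attained fl0.
  have [kr [Sr fr <-]] := hmin_attained fr0.
  apply: leq_trans (hmin_le_kfeasible (kfeasible_union du fl fr)) _.
  by rewrite cardsU leq_subr.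
have [k [S fS <-]] := hmin_attained (kfeasible_union du fl0 fr0).
have [kl fl] := kfeasible_restrict du fS.
have [kr fr] := kfeasible_restrict (disjoint_unionC du) fS.
rewrite (card_disjoint_union du (kfeasible_sub fS)).
exact: leq_add (hmin_le_kfeasible fl) (hmin_le_kfeasible fr).
Qed.
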